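(* Assume Condition (C) and $\lambda/2<h<\lambda$. If $\eta\in\mathcal X$ contains either a cluster of pluses having a convex side of length $l_1<\frac{2J}{\lambda+h}$, or a cluster of minuses having a convex side of length $l_2<\frac{2J}{\lambda-h}$, then $V_\eta<2J$.
   Context: Let $\Lambda=\{1,\dots,L\}^2$, $\mathcal X=\{-1,0,+1\}^\Lambda$, $\partial^-\Lambda$ the sites of $\Lambda$ with a nearest neighbour outside $\Lambda$. Hamiltonian: $H(\eta)=\frac J2\sum_{i,j\in\Lambda,|i-j|=1}[\eta(i)-\eta(j)]^2+J\sum_{i\in\partial^-\Lambda}\sum_{j\notin\Lambda,|i-j|=1}\eta(i)^2-\lambda\sum_{i}\eta(i)^2-h\sum_i\eta(i)$. Condition (C): $J$ sufficiently large compared to $\lambda,h>0$; $L>(2J/(\lambda-h))^3$; none of $\tfrac{2J}{\lambda+h},\tfrac{2J}{\lambda-h},\tfrac{2J+\lambda-h}{\lambda+h},\tfrac{J+\lambda+h}{h}$ is an integer. Clusters of pluses (resp. minuses) of $\eta$ are the maximal connected components of the union of the closed unit squares centred at sites with spin $+1$ (resp. $-1$). The boundary of a cluster is a union of maximal straight segments (sides); the length of a side is the number of unit edges it contains. A corner of the boundary is convex if the interior angle of the cluster there is a right angle, concave otherwise; a side is convex if both its endpoints are convex corners. $V_\eta=\Phi(\eta,\{\zeta:H(\zeta)<H(\eta)\})-H(\eta)$, where $\Phi(\eta,A)$ is the minimum over paths (sequences of single-site changes) from $\eta$ to $A$ of the max of $H$ along the path. *)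

(* Blume-Capel model on the box Lambda = {0..L-1}^2
   (a harmless shift of {1..L}^2). *)
From HB Require Import structures.
From mathcomp Require Import all_boot all_order all_algebra.
From mathcomp Require Import reals.
Set Implicit Arguments. Unset Strict Implicit. Unset Printing Implicit Defensive.
Import Order.TTheory GRing.Theory Num.Theory.
Local Open Scope ring_scope.

Inductive spin := Minus | Zero | Plus.

Definition spin_eqb (a b : spin) : bool :=
  match a, b with
  | Minus, Minus | Zero, Zero | Plus, Plus => true
  | _, _ => false
  end.

Lemma spin_eqP : Equality.axiom spin_eqb.
Proof. by case; case; constructor. Qed.

HB.instance Definition _ := hasDecEq.Build spin spin_eqP.

Definition sval {R : nzRingType} (s : spin) : R :=
  match s with Minus => -1 | Zero => 0 | Plus => 1 end.

Definition site (L : nat) := ('I_L * 'I_L)%type.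
Definition config (L : nat) := site L -> spin.

Definition nn (L : nat) (i j : site L) : bool :=
  (((i.1 : nat) == j.1) && (((i.2 : nat) == (j.2 : nat).+1) || ((j.2 : nat) == (i.2 : nat).+1)))
  || (((i.2 : nat) == j.2) && (((i.1 : nat) == (j.1 : nat).+1) || ((j.1 : nat) == (i.1 : nat).+1))).

(* number of nearest neighbours of i lying outside Lambda
   (nonzero exactly for i in the inner boundary of Lambda) *)
Definition n_out (L : nat) (i : site L) : nat :=
  ((i.1 : nat) == 0%N) + ((i.1 : nat) == L.-1) + ((i.2 : nat) == 0%N) + ((i.2 : nat) == L.-1).

Definition Ham {R : fieldType} (J lam h : R) (L : nat) (eta : config L) : R :=
  J / 2%:R * (\sum_(i : site L) \sum_(j : site L | nn i j) (sval (eta i) - sval (eta j)) ^+ 2)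
  + J * (\sum_(i : site L) (n_out i)%:R * sval (eta i) ^+ 2)
  - lam * (\sum_(i : site L) sval (eta i) ^+ 2)
  - h * (\sum_(i : site L) sval (eta i)).

(* closed unit squares centred at i and j intersect iff the sites are at
   sup-distance <= 1 *)
Definition sq_touch (L : nat) (i j : site L) : bool :=
  [&& (i.1 <= (j.1 : nat).+1)%N, (j.1 <= (i.1 : nat).+1)%N,
      (i.2 <= (j.2 : nat).+1)%N & (j.2 <= (i.2 : nat).+1)%N].

Definition spin_rel (L : nat) (eta : config L) (sigma : spin) : rel (site L) :=
  fun i j => [&& eta i == sigma, eta j == sigma & sq_touch i j].

(* C is a cluster of spins sigma (sigma = Plus / Minus) of eta:
   a connected component of the union of the squares of sigma-sites *)
Definition is_cluster (L : nat) (eta : config L) (sigma : spin) (C : {set site L}) : Prop :=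
  exists x : site L, eta x = sigma /\ C = [set y | connect (spin_rel eta sigma) x y].

Definition inC (L : nat) (C : {set site L}) (p : int * int) : bool :=
  [exists s in C, (Posz s.1 == p.1) && (Posz s.2 == p.2)].

Definition axis_dirs : seq (int * int) := [:: (1, 0); (-1, 0); (0, 1); (0, -1)].

Definition shift (p d : int * int) (k : int) : int * int :=
  (p.1 + k * d.1, p.2 + k * d.2).

(* A side of the boundary of C: the sites p, p+d, ..., p+(l-1)d lie in C, the
   sites across the (outward) normal n do not; the unit edges separating them
   form a straight boundary segment of length l, maximal in direction +-d. *)
Definition is_side (L : nat) (C : {set site L}) (p d n : int * int) (l : nat) : Prop :=
  [/\ [&& d \in axis_dirs, n \in axis_dirs & d.1 * n.1 + d.2 * n.2 == 0],
      (0 < l)%N,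
      (forall k : nat, (k < l)%N ->
          inC C (shift p d k%:Z) && ~~ inC C (shift (shift p d k%:Z) n 1)),
      ~~ (inC C (shift p d (-1)) && ~~ inC C (shift (shift p d (-1)) n 1))
    & ~~ (inC C (shift p d l%:Z) && ~~ inC C (shift (shift p d l%:Z) n 1))].

(* both endpoints are convex corners (interior angle of C is a right angle):
   the boundary turns towards the outward normal, i.e. the square adjacent to
   the end of the side, on the line of the side, is not in C *)
Definition convex_side (L : nat) (C : {set site L}) (p d n : int * int) (l : nat) : Prop :=
  is_side C p d n l /\ ~~ inC C (shift p d (-1)) /\ ~~ inC C (shift p d l%:Z).

Definition has_convex_side_of_length (L : nat) (C : {set site L}) (l : nat) : Prop :=
  exists p d n, convex_side C p d n l.

Definition single_flip (L : nat) (a b : config L) : Prop :=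
  exists s : site L, a s <> b s /\ forall t, t <> s -> a t = b t.

Fixpoint is_path (L : nat) (a : config L) (p : seq (config L)) : Prop :=
  match p with
  | [::] => True
  | b :: q => single_flip a b /\ is_path b q
  end.

Definition path_max {R : realDomainType} (L : nat) (f : config L -> R)
  (a : config L) (p : seq (config L)) : R :=
  foldr Num.max (f a) (map f p).

(* "V_eta < c" where V_eta = Phi(eta, {zeta : H zeta < H eta}) - H eta and
   Phi(eta, A) = min over paths from eta to A of the max of H along the path:
   min_{paths} (max H) - H eta < c  iff  some such path has max H - H eta < c. *)
Definition V_lt {R : realFieldType} (J lam h : R) (L : nat) (eta : config L) (c : R) : Prop :=
  exists p : seq (config L),
    [/\ is_path eta p,
        Ham J lam h (last eta p) < Ham J lam h eta
      & path_max (@Ham R J lam h L) eta p - Ham J lam h eta < c].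

Definition not_integer {R : nzRingType} (x : R) : Prop := forall z : int, x <> z%:~R.

From Pilot Require Import Defs.
From HB Require Import structures.
From mathcomp Require Import all_boot all_order all_algebra.
From mathcomp Require Import reals.
From mathcomp Require Import zify ring lra.
Set Implicit Arguments. Unset Strict Implicit. Unset Printing Implicit Defensive.
Import Order.TTheory GRing.Theory Num.Theory.
Local Open Scope ring_scope.

(* Let s_0, ..., s_{l-1} be the sites of the side and flip them to 0
   one at a time, in this order.  Removing a spin sigma costs c in the
   single-site terms and J (2 sigma x - 1) for each neighbouring spin x.  When
   s_k is flipped, the neighbour behind it (s_{k-1}, or the point beyond the
   first convex corner) and the neighbour across the side carry no sigma, so
   the step costs at most c; at the last step the point beyond the second
   convex corner carries no sigma either, which saves 2J.  Along the path
   H - H(eta) <= k c < 2J, and at the end H - H(eta) <= l c - 2J < 0. *)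

(* The numerical value of a spin (the name sval alone denotes the projection of
   sigma types). *)
Local Notation sv := Defs.sval.

Section Lattice.
Variable L : nat.

Definition coord (s : site L) : int * int := (Posz s.1, Posz s.2).
Definition nbr_pt (s : site L) (e : int * int) : int * int := shift (coord s) e 1.

Definition in_box (p : int * int) : bool := (0 <= p.1 < L%:Z) && (0 <= p.2 < L%:Z).

Lemma coord_inj : injective coord.
Proof. by move=> [a b] [c d] [/val_inj -> /val_inj ->]. Qed.

Lemma nn_count (s j : site L) :
  (nn s j : nat) = (\sum_(e <- axis_dirs) (coord j == nbr_pt s e))%N.
Proof.
by rewrite /axis_dirs !big_cons big_nil /nbr_pt /shift /coord /nn /= !xpair_eqE; lia.
Qed.

Lemma exists_site_at (p : int * int) : [exists j, coord j == p] = in_box p.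
Proof.
apply/existsP/idP => [[j /eqP <-]|].
  by case: j => [a b]; rewrite /in_box /coord /=; have := ltn_ord a; have := ltn_ord b; lia.
case: p => [p1 p2]; rewrite /in_box /= => hp.
have h1 : (`|p1| < L)%N by lia.
have h2 : (`|p2| < L)%N by lia.
by exists (Ordinal h1, Ordinal h2); rewrite /coord xpair_eqE /=; lia.
Qed.

(* The boundary term of H counts, for each site, its neighbours in Z^2 that
   lie outside the box: together with the neighbours inside there are four. *)
Lemma n_out_missing (s : site L) :
  (n_out s + \sum_(e <- axis_dirs) in_box (nbr_pt s e))%N = 4%N.
Proof.
rewrite /axis_dirs !big_cons big_nil /in_box /nbr_pt /shift /coord /n_out /=.
by have := ltn_ord s.1; have := ltn_ord s.2; lia.
Qed.

Lemma nn_irr (s : site L) : nn s s = false.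
Proof. by apply/negbTE; rewrite /nn; lia. Qed.

Lemma nn_sym (s j : site L) : nn s j = nn j s.
Proof. by rewrite /nn; apply/idP/idP; lia. Qed.

(* The spin value of a configuration at a point of Z^2 (0 outside the box):
   the boundary condition of H is the zero configuration outside Lambda. *)
Definition spin_at {R : nzRingType} (a : config L) (p : int * int) : R :=
  \sum_(j | coord j == p) sv (a j).

Lemma sum_at_point (R : nzRingType) (p : int * int) (G : site L -> R) :
  \sum_(j | coord j == p) G j = if [pick j | coord j == p] is Some j then G j else 0.
Proof.
case: pickP => [j /eqP hj|h]; last by rewrite big_pred0.
rewrite (big_pred1 j) // => t /=; apply/eqP/eqP => [/eqP|->//].
by rewrite -hj => /eqP /coord_inj.
Qed.

Lemma sum_at_point_affine (R : nzRingType) (a : config L) (p : int * int) (K M : R) :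
  \sum_(j | coord j == p) (K - M * sv (a j)) = (in_box p)%:R * K - M * spin_at a p.
Proof.
rewrite /spin_at -exists_site_at !sum_at_point; case: pickP => [j hj|h].
  have -> : [exists j, coord j == p] by apply/existsP; exists j.
  by rewrite mul1r.
have -> : [exists j, coord j == p] = false by apply/existsP => -[j]; rewrite h.
by rewrite mul0r mulr0 subr0.
Qed.

Lemma sum_nn (R : nzRingType) (s : site L) (G : site L -> R) :
  \sum_(j | nn s j) G j = \sum_(e <- axis_dirs) \sum_(j | coord j == nbr_pt s e) G j.
Proof.
rewrite big_mkcond (eq_bigr (fun j => \sum_(e <- axis_dirs) (coord j == nbr_pt s e)%:R * G j))
  => [|j _]; last first.
  by rewrite -mulr_suml -natr_sum -nn_count; case: (nn s j); rewrite ?mul1r ?mul0r.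
rewrite exchange_big; apply: eq_bigr => e _; rewrite [RHS]big_mkcond.
by apply: eq_bigr => j _; case: (_ == _); rewrite ?mul1r ?mul0r.
Qed.

Lemma sum_flip (R : nzRingType) (F : site L -> spin -> R) (a b : config L) s :
  (forall t, t != s -> b t = a t) ->
  \sum_i F i (b i) - \sum_i F i (a i) = F s (b s) - F s (a s).
Proof.
move=> hb; rewrite (bigD1 s) //= [X in _ - X](bigD1 s) //=.
rewrite (eq_bigr (fun i => F i (a i))) => [|i /hb -> //].
by rewrite opprD addrACA subrr addr0.
Qed.

(* The same for the (symmetric) nearest-neighbour double sum: each bond at s
   is counted twice. *)
Lemma interaction_flip (R : comNzRingType) (a b : config L) s :
  (forall t, t != s -> b t = a t) ->
  \sum_i \sum_(j | nn i j) (sv (b i) - sv (b j) : R) ^+ 2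
  - \sum_i \sum_(j | nn i j) (sv (a i) - sv (a j) : R) ^+ 2
  = 2%:R * \sum_(j | nn s j) ((sv (b s) - sv (a j)) ^+ 2 - (sv (a s) - sv (a j)) ^+ 2).
Proof.
move=> hb.
pose D i j := (sv (b i) - sv (b j) : R) ^+ 2 - (sv (a i) - sv (a j)) ^+ 2.
have hD i j : i != s -> j != s -> D i j = 0 by move=> hi hj; rewrite /D (hb _ hi) (hb _ hj) subrr.
have hnn j : nn s j -> j != s by apply: contraTneq => ->; rewrite nn_irr.
rewrite -sumrB (eq_bigr (fun i => \sum_(j | nn i j) D i j)); last by move=> i _; rewrite sumrB.
rewrite (bigD1 s) //=.
have -> : \sum_(i | i != s) \sum_(j | nn i j) D i j = \sum_(j | nn s j) D j s.
  rewrite big_mkcond [RHS]big_mkcond; apply: eq_bigr => i _.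
  case: eqP => [->|/eqP hi] /=; first by rewrite nn_irr.
  rewrite nn_sym; have [his|his] := boolP (nn i s).
    by rewrite (bigD1 s) //= big1 ?addr0 // => j /andP [_ hj]; apply: hD.
  by rewrite big1 // => j hij; apply: hD => //; apply: contraNneq his => <-.
rewrite -big_split mulr_sumr; apply: eq_bigr => j /hnn hj.
by rewrite /D /= (hb _ hj); ring.
Qed.

Lemma Ham_flip (R : realFieldType) (J lam h : R) (a b : config L) (s : site L) :
  (forall t, t != s -> b t = a t) ->
  Ham J lam h b - Ham J lam h a =
   J * (4%:R * (sv (b s) ^+ 2 - sv (a s) ^+ 2)
        - 2%:R * (sv (b s) - sv (a s)) * \sum_(e <- axis_dirs) (spin_at a (nbr_pt s e) : R))
   - lam * (sv (b s) ^+ 2 - sv (a s) ^+ 2) - h * (sv (b s) - sv (a s)).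
Proof.
move=> hb.
set K := sv (b s) ^+ 2 - sv (a s) ^+ 2 : R.
set M := 2%:R * (sv (b s) - sv (a s)) : R.
set N := (\sum_(e <- axis_dirs) in_box (nbr_pt s e))%N.
have hnbr : \sum_(j | nn s j) ((sv (b s) - sv (a j)) ^+ 2 - (sv (a s) - sv (a j)) ^+ 2)
   = N%:R * K - M * \sum_(e <- axis_dirs) (spin_at a (nbr_pt s e) : R).
  rewrite sum_nn (eq_bigr (fun e => (in_box (nbr_pt s e))%:R * K - M * spin_at a (nbr_pt s e))).
    by rewrite sumrB -mulr_suml -mulr_sumr natr_sum.
  by move=> e _; rewrite -sum_at_point_affine; apply: eq_bigr => j _; rewrite /K /M; ring.
(* The boundary term supplies K for each missing neighbour. *)
have hout : (n_out s)%:R = 4%:R - N%:R :> R by rewrite -(n_out_missing s) natrD addrK.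
have hI := interaction_flip R hb.
have hB := sum_flip (fun i x => (n_out i)%:R * (sv x : R) ^+ 2) hb.
have hS2 := sum_flip (fun i x => (sv x : R) ^+ 2) hb.
have hS1 := sum_flip (fun i x => (sv x : R)) hb.
rewrite /= in hB hS2 hS1.
have hlin (x1 x2 y1 y2 z1 z2 w1 w2 : R) :
  (J / 2%:R * x1 + J * y1 - lam * z1 - h * w1) - (J / 2%:R * x2 + J * y2 - lam * z2 - h * w2)
  = J / 2%:R * (x1 - x2) + J * (y1 - y2) - lam * (z1 - z2) - h * (w1 - w2) by ring.
rewrite /Ham hlin hI hnbr hB hS2 hS1 hout /K /M.
by field.
Qed.
End Lattice.

Definition opp_dir (e : int * int) : int * int := (- e.1, - e.2).

Lemma opp_axis_dir (e : int * int) : e \in axis_dirs -> opp_dir e \in axis_dirs.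
Proof. by rewrite /opp_dir !inE => /or4P [] /eqP ->. Qed.

Lemma sum_axis_dirs (R : comNzRingType) (F : int * int -> R) (d n : int * int) :
  d \in axis_dirs -> n \in axis_dirs -> d.1 * n.1 + d.2 * n.2 == 0 ->
  \sum_(e <- axis_dirs) F e = F d + F (opp_dir d) + F n + F (opp_dir n).
Proof.
rewrite /axis_dirs /opp_dir !big_cons big_nil addr0 !inE.
by case/or4P => /eqP -> ; case/or4P => /eqP -> //= _; rewrite ?oppr0 ?opprK; ring.
Qed.

Lemma shift_opp (p d : int * int) (a : int) :
  shift (shift p d a) (opp_dir d) 1 = shift p d (a - 1).
Proof. by case: p d => [p1 p2] [d1 d2]; rewrite /shift /opp_dir /=; congr pair; ring. Qed.

Lemma shift_succ (p d : int * int) (a : int) : shift (shift p d a) d 1 = shift p d (a + 1).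
Proof. by case: p d => [p1 p2] [d1 d2]; rewrite /shift /=; congr pair; ring. Qed.

Lemma shift_inj (p d : int * int) (k m : nat) :
  d \in axis_dirs -> shift p d k%:Z = shift p d m%:Z -> k = m.
Proof. by case: p => p1 p2; rewrite /shift !inE => /or4P [] /eqP -> /= [h1 h2]; lia. Qed.

Lemma spin_at_le1 (R : realFieldType) L (a : config L) (sigma : spin) p :
  sigma != Zero -> sv sigma * (spin_at a p : R) <= 1.
Proof.
move=> hs; rewrite /spin_at sum_at_point; case: pickP => [j _|_]; last by rewrite mulr0 ler01.
by case: sigma hs; case: (a j) => //= _; lra.
Qed.

Lemma spin_at_le0 (R : realFieldType) L (a : config L) (sigma : spin) p :
  sigma != Zero -> (forall j, coord j = p -> a j != sigma) -> sv sigma * (spin_at a p : R) <= 0.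
Proof.
move=> hs hj; rewrite /spin_at sum_at_point; case: pickP => [j /eqP /hj {hj}|_]; last by rewrite mulr0.
by case: sigma hs; case: (a j) => //= _ _; lra.
Qed.

Lemma inC_coord L (C : {set site L}) (t : site L) : t \in C -> inC C (coord t).
Proof. by move=> ht; apply/existsP; exists t; rewrite ht /= !eqxx. Qed.

Lemma inC_site L (C : {set site L}) (p : int * int) : inC C p -> exists2 t, t \in C & coord t = p.
Proof.
case: p => p1 p2 /existsP [t /andP [ht /andP [/eqP h1 /eqP h2]]].
by exists t => //; rewrite /coord h1 h2.
Qed.

Lemma foldr_max_lt (R : realDomainType) (B x0 : R) (s : seq R) :
  x0 < B -> all (fun y => y < B) s -> foldr Num.max x0 s < B.
Proof. by elim: s => [|y s IH] //= hx0 /andP [hy hs]; rewrite gt_max hy IH. Qed.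

Section ConvexSide.
Variables (L : nat) (eta : config L) (sigma : spin) (x : site L) (C : {set site L}).
Hypothesis sigma_nz : sigma != Zero.
Hypothesis eta_x : eta x = sigma.
Hypothesis C_def : C = [set y | connect (spin_rel eta sigma) x y].

Lemma cluster_spin (y : site L) : y \in C -> eta y = sigma.
Proof.
rewrite C_def inE => /connectP [pth hp ->].
elim: pth x eta_x hp => [|z pth IH] u hu //= /andP [/and3P [_ /eqP hz _] hp].
exact: IH hz hp.
Qed.

(* A site adjacent to the cluster but not in it does not carry sigma: otherwise
   its square would touch the cluster and it would belong to it. *)
Lemma nbr_outside_not_sigma (t j : site L) (e : int * int) :
  t \in C -> e \in axis_dirs -> ~~ inC C (nbr_pt t e) -> coord j = nbr_pt t e -> eta j != sigma.
Proof.
move=> ht he hout hj; apply/negP => /eqP hej.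
have htouch : sq_touch t j.
  move: hj he; rewrite /nbr_pt /shift /coord; case: e hout => [e1 e2] _.
  rewrite !inE => [[h1 h2]] /or4P [] /eqP [he1 he2]; subst e1 e2; apply/and4P; split; lia.
have hjC : j \in C.
  move: (ht); rewrite C_def !inE => hxt; apply: connect_trans hxt (connect1 _).
  by rewrite /spin_rel hej (cluster_spin ht) !eqxx htouch.
by move: hout; rewrite -hj inC_coord.
Qed.

Variables (p d n : int * int) (l : nat).
Hypothesis side : convex_side C p d n l.

(* The k-th site s_k = p + k d of the side. *)
Definition side_site (k : nat) : site L :=
  odflt x [pick t in C | coord t == shift p d k%:Z].

Lemma side_site_spec (k : nat) :
  (k < l)%N -> side_site k \in C /\ coord (side_site k) = shift p d k%:Z.
Proof.
move=> hkl; case: side => [[_ _ hk _ _] _].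
have /andP [/inC_site [t ht htc] _] := hk k hkl.
rewrite /side_site; case: pickP => [u /andP [hu /eqP hu2]|/(_ t)] //=.
by rewrite ht htc eqxx.
Qed.

Fixpoint flipped (k : nat) : config L :=
  if k is k'.+1 then (fun t => if t == side_site k' then Zero else flipped k' t) else eta.

Lemma flipped_cases (k : nat) (t : site L) : flipped k t = eta t \/ flipped k t = Zero.
Proof. by elim: k => [|k IH] /=; [left | case: eqP => _; [right|]]. Qed.

Lemma flipped_done (m k : nat) : (m < k)%N -> flipped k (side_site m) = Zero.
Proof.
elim: k => // k IH; rewrite ltnS leq_eqVlt => /orP [/eqP ->|/IH hm] /=; first by rewrite eqxx.
by case: eqP.
Qed.

Lemma flipped_next (k : nat) : (k < l)%N -> flipped k (side_site k) = sigma.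
Proof.
move=> hkl; have [hqC hqc] := side_site_spec hkl.
have hd : d \in axis_dirs by case: side => [[/and3P []]].
suff : forall m, (m <= k)%N -> flipped m (side_site k) = eta (side_site k).
  by move/(_ k (leqnn k)) ->; exact: cluster_spin.
elim => // m IH hm /=; rewrite IH ?(ltnW hm) //; case: eqP => // heq.
have [_ hqm] := side_site_spec (ltn_trans hm hkl).
have hkm : k = m by apply: (shift_inj (p := p) hd); rewrite -hqc -hqm heq.
by move: hm; rewrite hkm ltnn.
Qed.

Lemma flipped_not_sigma (k : nat) (P : int * int) :
  (forall j, coord j = P -> eta j != sigma) -> forall j, coord j = P -> flipped k j != sigma.
Proof. by move=> H j hj; case: (flipped_cases k j) => ->; [apply: H | rewrite eq_sym]. Qed.

Lemma flip_path (i m : nat) : (i + m <= l)%N -> is_path (flipped i) (map flipped (iota i.+1 m)).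
Proof.
elim: m i => [|m IH] i him //=; split; last by apply: IH; rewrite addSnnS.
exists (side_site i); split; last by move=> t /eqP /negbTE /= ->.
by rewrite /= eqxx flipped_next; [apply/eqP | lia].
Qed.

Lemma flip_path_last (i m : nat) : last (flipped i) (map flipped (iota i.+1 m)) = flipped (i + m).
Proof. by elim: m i => [|m IH] i /=; [rewrite addn0 | rewrite -addSnnS; apply: IH]. Qed.

Variables (R : realFieldType) (J lam h : R).
Let H := @Ham R J lam h L.
(* The cost of removing a spin sigma from the external field. *)
Let c : R := lam + h * sv sigma.

Lemma flip_step_energy (k : nat) : (k < l)%N ->
  H (flipped k.+1) - H (flipped k) =
  J * (- 4%:R + 2%:R * (sv sigma * \sum_(e <- axis_dirs) (spin_at (flipped k) (nbr_pt (side_site k) e) : R))) + c.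
Proof.
move=> hkl; rewrite /H (@Ham_flip _ _ _ _ _ _ _ (side_site k)); last by move=> t /negbTE /= ->.
rewrite /= eqxx flipped_next //.
have hsg : (sv sigma : R) ^+ 2 = 1 by case: sigma sigma_nz => //= _; rewrite ?sqrrN expr1n.
by rewrite hsg /c /=; ring.
Qed.

(* Each step costs at most c: the neighbour of s_k behind it (s_{k-1}, or the
   point beyond the first convex corner) and the one across the side carry no
   sigma.  At the last step the point beyond the second corner carries no
   sigma either, which saves 2J. *)
Lemma flip_step_bound (k : nat) : (k < l)%N -> 0 <= J ->
  H (flipped k.+1) - H (flipped k) <= c - (if k.+1 == l then 2%:R * J else 0).
Proof.
move=> hkl hJ; rewrite flip_step_energy //.
case: side => [[/and3P [hd hn hdn] _ hk _ _] [corner_first corner_last]].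
rewrite (sum_axis_dirs (fun e => spin_at (flipped k) (nbr_pt (side_site k) e)) hd hn hdn) /=.
have [hqC hqc] := side_site_spec hkl.
have hnb e : nbr_pt (side_site k) e = shift (shift p d k%:Z) e 1 by rewrite /nbr_pt hqc.
have behind : sv sigma * spin_at (flipped k) (nbr_pt (side_site k) (opp_dir d)) <= 0 :> R.
  apply: spin_at_le0 => //; case: k hkl hqC hqc hnb => [|k'] hkl hqC hqc hnb.
    apply: flipped_not_sigma => j hj; apply: (nbr_outside_not_sigma hqC (opp_axis_dir hd) _ hj).
    by rewrite hnb shift_opp sub0r.
  move=> j hj; have [_ hqk'] := side_site_spec (ltnW hkl).
  have -> : j = side_site k' by apply: coord_inj; rewrite hj hqk' hnb shift_opp; congr shift; lia.
  by rewrite flipped_done // eq_sym.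
have across : sv sigma * spin_at (flipped k) (nbr_pt (side_site k) n) <= 0 :> R.
  apply: spin_at_le0 => //; apply: flipped_not_sigma => j hj.
  by apply: (nbr_outside_not_sigma hqC hn _ hj); rewrite hnb; have /andP [] := hk k hkl.
have inward : sv sigma * spin_at (flipped k) (nbr_pt (side_site k) (opp_dir n)) <= 1 :> R.
  exact: spin_at_le1.
have ahead : sv sigma * spin_at (flipped k) (nbr_pt (side_site k) d) <= (if k.+1 == l then 0 else 1) :> R.
  case: eqP => hkl'; last exact: spin_at_le1.
  apply: spin_at_le0 => //; apply: flipped_not_sigma => j hj.
  apply: (nbr_outside_not_sigma hqC hd _ hj).
  by rewrite hnb shift_succ (_ : k%:Z + 1 = l%:Z) //; lia.
by rewrite /c; case: (k.+1 == l) ahead => ahead; nra.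
Qed.

Lemma flip_energy_bound (k : nat) : (k <= l)%N -> 0 <= J ->
  H (flipped k) - H eta <= k%:R * c - (if k == l then 2%:R * J else 0).
Proof.
move=> hkl hJ; have hl : (0 < l)%N by case: side => [[]].
elim: k hkl => [|k IH] hkl.
  have -> : (0 == l) = false by apply/eqP => h0; move: hl; rewrite -h0.
  by rewrite subrr mul0r subr0.
have hk : (k < l)%N by [].
have := flip_step_bound hk hJ; have := IH (ltnW hk).
have -> : (k == l) = false by apply/eqP => h0; move: hk; rewrite h0 ltnn.
rewrite -[k.+1]addn1 natrD addn1 => h1 h2.
have -> : H (flipped k.+1) - H eta = (H (flipped k.+1) - H (flipped k)) + (H (flipped k) - H eta) by ring.
lra.
Qed.

Lemma V_lt_short_convex_side : 0 < c -> l%:R < 2%:R * J / c -> V_lt J lam h eta (2%:R * J).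
Proof.
move=> hc; rewrite ltr_pdivlMr // => hlc.
have hl : (0 < l)%N by case: side => [[]].
have hl1 : 1 <= (l%:R : R) by rewrite ler1n.
have hJ : 0 < J by nra.
exists (map flipped (iota 1 l)); split.
- exact: flip_path.
- rewrite -/H (flip_path_last 0 l) add0n.
  by have := flip_energy_bound (leqnn l) (ltW hJ); rewrite eqxx; nra.
- rewrite /path_max -map_comp -/H.
  suff : foldr Num.max (H eta) [seq (H \o flipped) i | i <- iota 1 l] < H eta + 2%:R * J by lra.
  apply: foldr_max_lt; first by lra.
  apply/allP => y /mapP [k]; rewrite mem_iota => /andP [hk1 hk2] -> /=.
  have hkl : (k <= l)%N by lia.
  have := flip_energy_bound hkl (ltW hJ).
  have hk : (k%:R : R) <= l%:R by rewrite ler_nat.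
  by case: (k == l) => h1; nra.
Qed.
End ConvexSide.

Unset Implicit Arguments.
Set Strict Implicit.
Theorem lemma4p3 (R : realType) (lam h : R) :
  0 < h -> lam / 2%:R < h -> h < lam ->
  exists J0 : R, forall (J : R) (L : nat),
    J0 < J ->
    ((2%:R * J / (lam - h)) ^+ 3 < L%:R) ->
    not_integer (2%:R * J / (lam + h)) ->
    not_integer (2%:R * J / (lam - h)) ->
    not_integer ((2%:R * J + lam - h) / (lam + h)) ->
    not_integer ((J + lam + h) / h) ->
    forall eta : config L,
      (exists (C : {set site L}) (l1 : nat),
          is_cluster eta Plus C /\ has_convex_side_of_length C l1 /\
          l1%:R < 2%:R * J / (lam + h))
      \/
      (exists (C : {set site L}) (l2 : nat),
          is_cluster eta Minus C /\ has_convex_side_of_length C l2 /\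
          l2%:R < 2%:R * J / (lam - h)) ->
      V_lt J lam h eta (2%:R * J).
Proof.
move=> hh hlh hhl; exists 0 => J L _ _ _ _ _ _ eta.
case=> [[C [l1 [[x [hx hC]] [[p [d [n side]]] short]]]]
      | [C [l2 [[x [hx hC]] [[p [d [n side]]] short]]]]].
- by apply: (V_lt_short_convex_side (sigma := Plus) _ hx hC side); rewrite /= ?mulr1 //; lra.
- by apply: (V_lt_short_convex_side (sigma := Minus) _ hx hC side); rewrite /= ?mulrN1 //; lra.
Qed.
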